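(* Let $\Sigma$ be a finite totally ordered alphabet. For all $x\in\Sigma^n$, $$|\mathcal{C}_x|=\sum_{y\in G_{x,\leq n}}\frac{1}{|\mathsf{Orbit}(y)|}=\sum_{y\in G_{x,\leq n}}\frac{1}{\mathsf{FP}(y)}.$$
   Context: For $y\in\Sigma^n$, $\mathsf{Orbit}(y)$ is the set consisting of $y$ and all its distinct cyclic rotations. $\mathsf{FP}(y)$ is the fundamental period of $y$: the least $p$ such that $y=y_1^{n/p}$ for some $y_1\in\Sigma^p$. For an orbit $E$ and $x\in\Sigma^n$, $E<x$ means $E$ contains a string lexicographically less than $x$; $\mathcal{C}_x$ is the set of orbits $E$ with $E<x$; and $G_{x,\leq p}=\bigcup_{E\in\mathcal{C}_x,\ |E|\text{ divides }p}E$. *)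

From mathcomp Require Import all_boot all_order all_algebra.
Set Implicit Arguments. Unset Strict Implicit. Unset Printing Implicit Defensive.
Import Order.TTheory GRing.Theory.

Definition lex_lt d (T : orderType d) (s t : seq T) : bool :=
  ((s : seqlexi T) < (t : seqlexi T))%O.

Definition Orbit (T : finType) n (y : n.-tuple T) : {set n.-tuple T} :=
  [set rot_tuple i y | i : 'I_n.+1].

Definition orbits (T : finType) n : {set {set n.-tuple T}} :=
  [set Orbit y | y : n.-tuple T].

Definition orbit_lt d (T : finOrderType d) n (E : {set n.-tuple T}) (x : n.-tuple T) :=
  [exists y in E, lex_lt y x].

Definition Cx d (T : finOrderType d) n (x : n.-tuple T) : {set {set n.-tuple T}} :=
  [set E in orbits T n | orbit_lt E x].

Definition Gx d (T : finOrderType d) n (x : n.-tuple T) (p : nat) : {set n.-tuple T} :=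
  \bigcup_(E in Cx x | #|E| %| p) E.

(* FP(y): least p (p >= 1) such that y = y1^(n/p) for some y1 of length p.
   Since y1 must be the prefix of length p, this is: p %| n and y equals
   (n/p) concatenated copies of take p y. *)
Definition FP (T : finType) n (y : n.-tuple T) : nat :=
  head n [seq p <- iota 1 n | (p %| n) && (flatten (nseq (n %/ p) (take p y)) == y)].

From mathcomp Require Import all_boot all_order all_algebra.
Import Order.TTheory GRing.Theory.
Set Implicit Arguments. Unset Strict Implicit. Unset Printing Implicit Defensive.

(* The orbits in C_x are pairwise disjoint and nonempty, and their union is
   G_{x,<=n} because every orbit size divides n; so each orbit contributes
   |E| * (1/|E|) = 1 to the sum.  The orbit of y is the cycle of y under the
   one-step rotation, whose length is its least period, and a period of y is
   exactly a length p such that y is a power of its prefix of length p. *)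

Lemma rot_flatten_nseq (T : Type) (t : seq T) m :
  rot (size t) (flatten (nseq m t)) = flatten (nseq m t).
Proof.
case: m => [|m] /=; first by rewrite -(rot_size [::]).
rewrite rot_size_cat; elim: m => [|m IHm] /=; first by rewrite cats0.
by rewrite -catA IHm.
Qed.

Lemma rot_fixed_flatten_nseq (T : Type) k m (s : seq T) :
  size s = m * k -> rot k s = s -> s = flatten (nseq m (take k s)).
Proof.
elim: m s => [|m IHm] s size_s rot_s /=; first exact: size0nil.
set t := take k s; set z := drop k s.
have s_tz : s = t ++ z by rewrite cat_take_drop.
have size_t : size t = k by rewrite size_takel // size_s mulSn leq_addr.
have size_z : size z = m * k by rewrite size_drop size_s mulSn addKn.
have zt_tz : z ++ t = t ++ z by rewrite -s_tz -[in RHS]rot_s.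
case: m IHm size_z size_s => [|m] IHm size_z size_s.
  by rewrite /= cats0 (size0nil size_z) cats0 in s_tz *.
have k_le_z : k <= size z by rewrite size_z mulSn leq_addr.
have take_z : take k z = t.
  by have := congr1 (take k) zt_tz; rewrite takel_cat // take_size_cat.
have rot_z : rot k z = z.
  have := congr1 (drop k) zt_tz; rewrite (drop_size_cat _ size_t) /rot => drop_zt.
  rewrite -[in RHS]drop_zt drop_cat take_z; case: ltnP => // z_le_k.
  have size_zk : size z = k by apply/eqP; rewrite eqn_leq z_le_k k_le_z.
  by rewrite -size_zk subnn drop0 drop_size.
by rewrite {1}s_tz {1}(IHm z size_z rot_z) take_z.
Qed.

Lemma flatten_nseq_takeE (T : eqType) k (s : seq T) :
  k %| size s -> (flatten (nseq (size s %/ k) (take k s)) == s) = (rot k s == s).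
Proof.
move=> k_dvd_s; apply/eqP/eqP => [power_s | rot_s].
- have [k_le_s | /ltnW s_le_k] := leqP k (size s); last exact: rot_oversize.
  by have := rot_flatten_nseq (take k s) (size s %/ k); rewrite size_takel // power_s.
- by apply/esym/rot_fixed_flatten_nseq; rewrite ?divnK.
Qed.

Lemma head_filter_iota (P : pred nat) k n :
  0 < k <= n -> P k -> (forall p, 0 < p < k -> ~~ P p) ->
  head n [seq p <- iota 1 n | P p] = k.
Proof.
move=> /andP[k_gt0 k_le_n] Pk notP.
have -> : iota 1 n = iota 1 k.-1 ++ iota k (n - k.-1).
  by rewrite -{2}(prednK k_gt0) -add1n -iotaD subnKC // (leq_trans (leq_pred k)).
rewrite filter_cat (eq_in_filter (a2 := pred0)) ?filter_pred0; last first.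
  by move=> p; rewrite mem_iota add1n prednK // => p_lt_k; apply/negbTE/notP.
have -> : n - k.-1 = (n - k).+1 by rewrite -subSn // -{2}(prednK k_gt0) subSS.
by rewrite /= Pk.
Qed.

Section InjectiveOrbit.
Variables (T : finType) (f : T -> T).
Hypothesis f_inj : injective f.

Lemma iter_order_mul q x : iter (q * order f x) f x = x.
Proof. by elim: q => //= q IHq; rewrite mulSn iterD IHq iter_order. Qed.

Lemma iter_fixed_dvd_order m x : (iter m f x == x) = (order f x %| m).
Proof.
rewrite {1}(divn_eq m (order f x)) addnC iterD iter_order_mul /dvdn.
have r_lt : m %% order f x < order f x by rewrite ltn_mod order_gt0.
apply/eqP/eqP => [fixed | ->] //.
by rewrite -(findex_iter r_lt) fixed findex0.
Qed.

End InjectiveOrbit.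

Section Rotation.
Variables (T : finType) (n : nat).

Definition rot1 (y : n.-tuple T) : n.-tuple T := rot_tuple 1 y.

Lemma rot1_inj : injective rot1.
Proof. by move=> y z /(congr1 val) /rot_inj /val_inj. Qed.

Lemma iter_rot1 i y : i <= n -> val (iter i rot1 y) = rot i y.
Proof.
elim: i => [|i IHi] i_lt_n /=; first by rewrite rot0.
by rewrite IHi ?(ltnW i_lt_n) // -rotD ?add1n ?size_tuple.
Qed.

Lemma order_rot1_dvd y : order rot1 y %| n.
Proof.
rewrite -(iter_fixed_dvd_order rot1_inj); apply/eqP/val_inj.
by rewrite iter_rot1 // -{1}(size_tuple y) rot_size.
Qed.

Lemma mem_Orbit y z : (z \in Orbit y) = fconnect rot1 y z.
Proof.
apply/imsetP/idP => [[i _ ->] | y_to_z].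
  have -> : rot_tuple i y = iter i rot1 y by apply: val_inj; rewrite iter_rot1 // -ltnS.
  exact: fconnect_iter.
rewrite -(iter_findex y_to_z).
have [n0 | n_gt0] := posnP n.
  exists ord0 => //; apply: val_inj.
  by rewrite /= rot0 !(size0nil (etrans (size_tuple _) n0)).
have k_lt : findex rot1 y z < n.+1.
  by rewrite ltnS ltnW // (leq_trans (findex_max y_to_z)) // dvdn_leq ?order_rot1_dvd.
by exists (Ordinal k_lt) => //; apply: val_inj; rewrite iter_rot1 // -ltnS.
Qed.

Lemma card_Orbit (y : n.-tuple T) : #|Orbit y| = order rot1 y.
Proof. by apply: eq_card => z; rewrite mem_Orbit. Qed.

Lemma card_Orbit_dvd (y : n.-tuple T) : #|Orbit y| %| n.
Proof. by rewrite card_Orbit order_rot1_dvd. Qed.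

Lemma Orbit_id (y z : n.-tuple T) : z \in Orbit y -> Orbit z = Orbit y.
Proof.
rewrite mem_Orbit => y_to_z; apply/setP => w; rewrite !mem_Orbit.
by rewrite (same_connect (fconnect_sym rot1_inj) y_to_z).
Qed.

Lemma FP_card_Orbit (y : n.-tuple T) : 0 < n -> FP y = #|Orbit y|.
Proof.
move=> n_gt0; rewrite card_Orbit /FP; set k := order rot1 y.
have k_gt0 : 0 < k := order_gt0 rot1 y.
have k_dvd_n : k %| n := order_rot1_dvd y.
rewrite (eq_in_filter (a2 := fun p => (p %| n) && (k %| p))); last first.
  move=> p; rewrite mem_iota add1n ltnS => /andP[p_gt0 p_le_n] /=.
  have [p_dvd_n | //] := boolP (p %| n).
  have := @flatten_nseq_takeE _ p y; rewrite size_tuple => -> //.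
  by rewrite -(iter_rot1 y p_le_n) val_eqE (iter_fixed_dvd_order rot1_inj).
apply: head_filter_iota => [|/=|p /andP[p_gt0 p_lt_k]].
- by rewrite k_gt0 (dvdn_leq n_gt0 k_dvd_n).
- by rewrite k_dvd_n dvdnn.
- apply/nandP; right; apply: contraL p_lt_k => /(dvdn_leq p_gt0).
  by rewrite -leqNgt.
Qed.
End Rotation.

Import Num.Theory.
Local Open Scope ring_scope.

Lemma sum_cover_inv_card (R : numFieldType) (T : finType) (P : {set {set T}})
    (B : T -> {set T}) :
  trivIset P -> set0 \notin P -> {in P, forall A : {set T}, {in A, forall y, B y = A}} ->
  \sum_(y in cover P) (#|B y|%:R : R)^-1 = #|P|%:R.
Proof.
move=> tiP P_nonempty blockP.
rewrite big_trivIset // -sum1_card natr_sum; apply: eq_bigr => A A_in.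
rewrite (eq_bigr (fun=> (#|A|%:R)^-1)); last by move=> y /(blockP A A_in) ->.
rewrite sumr_const -(mulr_natr (#|A|%:R)^-1) mulVf // pnatr_eq0 -lt0n card_gt0.
by apply: contraNneq P_nonempty => <-.
Qed.

Section OrbitsBelow.
Variables (d : Order.disp_t) (T : finOrderType d) (n : nat) (x : n.-tuple T).

Lemma Cx_Orbit E : E \in Cx x -> exists y, E = Orbit y.
Proof. by rewrite inE => /andP[/imsetP[y _ ->] _]; exists y. Qed.

Lemma Cx_OrbitP E : E \in Cx x -> {in E, forall y, Orbit y = E}.
Proof. by move=> /Cx_Orbit[z ->] y; apply: Orbit_id. Qed.

Lemma set0_notin_Cx : set0 \notin Cx x.
Proof. by apply/negP; rewrite inE => /andP[_ /existsP[y]]; rewrite inE. Qed.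

Lemma trivIset_Cx : trivIset (Cx x).
Proof.
apply/trivIsetP => A B A_in B_in; apply: contraNT; rewrite -setI_eq0.
by case/set0Pn => y /setIP[yA yB]; rewrite -(Cx_OrbitP A_in yA) (Cx_OrbitP B_in yB).
Qed.

Lemma Gx_cover : Gx x n = cover (Cx x).
Proof.
apply: eq_bigl => E; have [/Cx_Orbit[y ->] | //] := boolP (E \in Cx x).
by rewrite card_Orbit_dvd.
Qed.

End OrbitsBelow.

Lemma Cx_tuple0 d (T : finOrderType d) (x : 0.-tuple T) : Cx x = set0.
Proof.
apply/setP => E; rewrite !inE; apply/negP => /andP[_ /existsP[y /andP[_]]].
by rewrite (tuple0 y) (tuple0 x) /lex_lt ltxx.
Qed.

Theorem lemma2 (d : Order.disp_t) (T : finOrderType d) (n : nat) (x : n.-tuple T) :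
  (#|Cx x|%:R : rat) = \sum_(y in Gx x n) (#|Orbit y|%:R)^-1 /\
  \sum_(y in Gx x n) ((#|Orbit y|%:R)^-1 : rat) = \sum_(y in Gx x n) ((FP y)%:R)^-1.
Proof.
split.
  rewrite Gx_cover (sum_cover_inv_card _ (trivIset_Cx x) (set0_notin_Cx x)) //.
  exact: Cx_OrbitP.
case: n x => [|n] x; first by rewrite Gx_cover Cx_tuple0 /cover !big_set0.
by apply: eq_bigr => y _; rewrite FP_card_Orbit.
Qed.
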